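(* There is no $*$-term $P$ such that $se(P)=X[\triangle\mapsto Y]$ for some $X\in\mathcal T_{A,\triangle}$ and $Y\in\mathcal T_A$ where $X\neq\triangle$, $X$ contains a leaf $\triangle$, and $X$ contains no leaf $\mathsf T$ and no leaf $\mathsf F$.
   Context: Let $A$ be a nonempty set of atoms; terms are closed terms over constants $\mathsf T,\mathsf F$, atoms $a\in A$, unary $\neg$, binary $\land^\circ$, $\lor^\circ$. Evaluation trees $\mathcal T_A$: $\mathsf T,\mathsf F\in\mathcal T_A$ and $(X\unlhd a\unrhd Y)\in\mathcal T_A$ for $X,Y\in\mathcal T_A$, $a\in A$. $\mathcal T_{A,\triangle}$: the same with leaves in $\{\mathsf T,\mathsf F,\triangle\}$. Leaf replacement $X[\ell_1\mapsto Y_1,\ldots]$ replaces every leaf labelled $\ell_i$ by $Y_i$. $se$: $se(\mathsf T)=\mathsf T$, $se(\mathsf F)=\mathsf F$, $se(a)=\mathsf T\unlhd a\unrhd\mathsf F$, $se(\neg P)=se(P)[\mathsf T\mapsto\mathsf F,\mathsf F\mapsto\mathsf T]$, $se(P\land^\circ Q)=se(P)[\mathsf T\mapsto se(Q)]$, $se(P\lor^\circ Q)=se(P)[\mathsf F\mapsto se(Q)]$. Syntactic categories ($a\in A$): $\mathsf T$-terms $P^{\mathsf T}::=\mathsf T\mid(a\land^\circ P^{\mathsf T})\lor^\circ P^{\mathsf T}$; $\mathsf F$-terms $P^{\mathsf F}::=\mathsf F\mid(a\lor^\circ P^{\mathsf F})\land^\circ P^{\mathsf F}$; $\ell$-terms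 $P^\ell::=(a\land^\circ P^{\mathsf T})\lor^\circ P^{\mathsf F}\mid(\neg a\land^\circ P^{\mathsf T})\lor^\circ P^{\mathsf F}$; $*$-terms $P^*::=P^c\mid P^d$, $P^c::=P^\ell\mid P^*\land^\circ P^d$, $P^d::=P^\ell\mid P^*\lor^\circ P^c$. *)

From Stdlib Require Import List.

Section Defs.
Variable A : Type.

Inductive term : Type :=
| tT : term
| tF : term
| tAtom : A -> term
| tNeg : term -> term
| tAnd : term -> term -> term
| tOr : term -> term -> term.

Inductive leaf : Type := lT | lF | lTri.

(* Trees with leaves in {T,F,triangle}; T_A is the subset with no triangle leaf. *)
Inductive etree : Type :=
| Leaf : leaf -> etree
| Node : etree -> A -> etree -> etree.   (* Node X a Y  =  X <| a |> Y *)

Fixpoint has_leaf (l : leaf) (X : etree) : Prop :=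
  match X with
  | Leaf l' => l' = l
  | Node X1 _ X2 => has_leaf l X1 \/ has_leaf l X2
  end.

Definition in_TA (X : etree) : Prop := ~ has_leaf lTri X.

Fixpoint repl (fT fF fTri : etree) (X : etree) : etree :=
  match X with
  | Leaf lT => fT
  | Leaf lF => fF
  | Leaf lTri => fTri
  | Node X1 a X2 => Node (repl fT fF fTri X1) a (repl fT fF fTri X2)
  end.

Fixpoint se (P : term) : etree :=
  match P with
  | tT => Leaf lT
  | tF => Leaf lF
  | tAtom a => Node (Leaf lT) a (Leaf lF)
  | tNeg P => repl (Leaf lF) (Leaf lT) (Leaf lTri) (se P)
  | tAnd P Q => repl (se Q) (Leaf lF) (Leaf lTri) (se P)
  | tOr P Q => repl (Leaf lT) (se Q) (Leaf lTri) (se P)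
  end.

Inductive Tterm : term -> Prop :=
| Tterm_T : Tterm tT
| Tterm_step : forall a P Q, Tterm P -> Tterm Q ->
    Tterm (tOr (tAnd (tAtom a) P) Q).

Inductive Fterm : term -> Prop :=
| Fterm_F : Fterm tF
| Fterm_step : forall a P Q, Fterm P -> Fterm Q ->
    Fterm (tAnd (tOr (tAtom a) P) Q).

Inductive lterm : term -> Prop :=
| lterm_pos : forall a P Q, Tterm P -> Fterm Q ->
    lterm (tOr (tAnd (tAtom a) P) Q)
| lterm_neg : forall a P Q, Tterm P -> Fterm Q ->
    lterm (tOr (tAnd (tNeg (tAtom a)) P) Q).

Inductive starterm : term -> Prop :=
| star_c : forall P, cterm P -> starterm P
| star_d : forall P, dterm P -> starterm P
with cterm : term -> Prop :=
| c_l : forall P, lterm P -> cterm P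
| c_and : forall P Q, starterm P -> dterm Q -> cterm (tAnd P Q)
with dterm : term -> Prop :=
| d_l : forall P, lterm P -> dterm P
| d_or : forall P Q, starterm P -> cterm Q -> dterm (tOr P Q).

End Defs.

Arguments tT {A}. Arguments tF {A}.
Arguments Leaf {A} _.
Arguments starterm {A} _. Arguments cterm {A} _. Arguments dterm {A} _.
Arguments lterm {A} _. Arguments Tterm {A} _. Arguments Fterm {A} _.
Arguments in_TA {A} _. Arguments has_leaf {A} _ _. Arguments repl {A} _ _ _ _.
Arguments se {A} _.

(* The trees se P of *-terms are irreducible: they are never obtained by
   gluing two copies of (trees tiled by) a single tree Y under a node.  For an
   l-term, se P is a node whose left subtree has only T leaves and whose right
   subtree has only F leaves, so no Y can tile both.  For P /\o Q (resp.
   P \/o Q), se P gets its T (resp. F) leaves replaced by the irreducible tree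
   se Q, which contains that leaf.  Such a substitution is injective, and any
   tiling of the result pulls back to a tiling of se P, so irreducibility is
   preserved.  A tree X[triangle |-> Y] with X a node whose leaves are all
   triangles is tiled by Y under its root, hence se P is never of that form. *)

From Stdlib Require Import Lia.

#[local] Arguments Node {A} _ _ _.
#[local] Arguments tAnd {A} _ _.
#[local] Arguments tOr {A} _ _.
#[local] Arguments tNeg {A} _.
#[local] Arguments tAtom {A} _.

Definition leaf_eq_dec (k l : leaf) : {k = l} + {k <> l}.
Proof. decide equality. Defined.

Section Trees.
Context {A : Type}.
Implicit Types (X Y Z S W : etree A) (k l : leaf) (a : A).

Inductive tiled Y : etree A -> Prop :=
| tiled_refl : tiled Y Y
| tiled_node Z1 a Z2 : tiled Y Z1 -> tiled Y Z2 -> tiled Y (Node Z1 a Z2).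

Definition irreducible Z : Prop :=
  forall Y Z1 a Z2, tiled Y Z1 -> tiled Y Z2 -> Z <> Node Z1 a Z2.

Lemma irreducible_leaf l : irreducible (Leaf l).
Proof. intros Y Z1 a Z2 _ _; discriminate. Qed.

Lemma tiled_irreducible Y Z : tiled Y Z -> irreducible Z -> Y = Z.
Proof. intros [|Z1 a Z2 H1 H2] HZ; [reflexivity | exfalso; exact (HZ _ _ _ _ H1 H2 eq_refl)]. Qed.

Lemma has_some_leaf X : exists l, has_leaf l X.
Proof.
  induction X as [l|X1 [l H] a X2 _]; [exists l; reflexivity | exists l; now left].
Qed.

Lemma tiled_has_leaf l Y Z : tiled Y Z -> has_leaf l Y -> has_leaf l Z.
Proof. induction 1; simpl; auto. Qed.

Lemma irreducible_node_disjoint X1 a X2 :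
  (forall l, has_leaf l X1 -> has_leaf l X2 -> False) -> irreducible (Node X1 a X2).
Proof.
  intros Hdisj Y Z1 b Z2 H1 H2 [= <- _ <-].
  destruct (has_some_leaf Y) as [l Hl].
  exact (Hdisj l (tiled_has_leaf l Y X1 H1 Hl) (tiled_has_leaf l Y X2 H2 Hl)).
Qed.

Lemma tiled_by_repl_tri Y X :
  ~ has_leaf lT X -> ~ has_leaf lF X -> tiled Y (repl (Leaf lT) (Leaf lF) Y X).
Proof.
  induction X as [[| |]|X1 IH1 a X2 IH2]; simpl; intros HT HF.
  - now contradiction HT.
  - now contradiction HF.
  - apply tiled_refl.
  - apply tiled_node; tauto.
Qed.

Fixpoint tsize X : nat :=
  match X with Leaf _ => 1 | Node X1 _ X2 => S (tsize X1 + tsize X2) end.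

Fixpoint subst l W X : etree A :=
  match X with
  | Leaf k => if leaf_eq_dec k l then W else Leaf k
  | Node X1 a X2 => Node (subst l W X1) a (subst l W X2)
  end.

Lemma repl_subst_T W X : repl W (Leaf lF) (Leaf lTri) X = subst lT W X.
Proof. induction X as [[| |]|X1 IH1 a X2 IH2]; simpl; congruence. Qed.

Lemma repl_subst_F W X : repl (Leaf lT) W (Leaf lTri) X = subst lF W X.
Proof. induction X as [[| |]|X1 IH1 a X2 IH2]; simpl; congruence. Qed.

Section Subst.
Variables (l : leaf) (W : etree A).

Lemma subst_leaf_neq k : k <> l -> subst l W (Leaf k) = Leaf k.
Proof. intro Hk; simpl; now destruct (leaf_eq_dec k l). Qed.

Lemma subst_leaf_eq : subst l W (Leaf l) = W.
Proof. simpl; now destruct (leaf_eq_dec l l). Qed.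

Lemma subst_id X : ~ has_leaf l X -> subst l W X = X.
Proof.
  induction X as [k|X1 IH1 a X2 IH2]; simpl; intro Hl.
  - now destruct (leaf_eq_dec k l).
  - rewrite IH1, IH2; tauto.
Qed.

Lemma has_leaf_subst_other k X : k <> l -> has_leaf k X -> has_leaf k (subst l W X).
Proof.
  intro Hk; induction X as [k'|X1 IH1 a X2 IH2]; [|simpl; tauto].
  intros ->; now rewrite subst_leaf_neq.
Qed.

Lemma has_leaf_subst_inner k X :
  has_leaf l X -> has_leaf k W -> has_leaf k (subst l W X).
Proof.
  induction X as [k'|X1 IH1 a X2 IH2]; [|simpl; tauto].
  intros -> HW; now rewrite subst_leaf_eq.
Qed.

Lemma has_leaf_subst_inv X : has_leaf l (subst l W X) -> has_leaf l X.
Proof.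
  induction X as [k|X1 IH1 a X2 IH2]; simpl; [|tauto].
  destruct (leaf_eq_dec k l) as [->|Hk]; [reflexivity | exact id].
Qed.

Lemma tsize_subst X : has_leaf l X -> tsize W <= tsize (subst l W X).
Proof.
  induction X as [k|X1 IH1 a X2 IH2]; simpl.
  - intros ->; now destruct (leaf_eq_dec l l).
  - intros [H|H]; [specialize (IH1 H) | specialize (IH2 H)]; lia.
Qed.

Hypothesis W_has_l : has_leaf l W.

(* W contains l, so it cannot sit inside a proper subtree of subst l W X. *)
Lemma subst_eq_W X : subst l W X = W -> X = Leaf l.
Proof.
  destruct X as [k|X1 a X2]; intro HX.
  - destruct (leaf_eq_dec k l) as [->|Hk]; [reflexivity|].
    rewrite subst_leaf_neq in HX by exact Hk.
    rewrite <- HX in W_has_l; now destruct (Hk W_has_l).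
  - assert (Hsize : tsize W = S (tsize (subst l W X1) + tsize (subst l W X2)))
      by (rewrite <- HX at 1; reflexivity).
    rewrite <- HX in W_has_l; simpl in W_has_l.
    destruct W_has_l as [H|H]; apply has_leaf_subst_inv, tsize_subst in H; lia.
Qed.

Lemma subst_inj X1 X2 : subst l W X1 = subst l W X2 -> X1 = X2.
Proof.
  revert X2; induction X1 as [k1|X11 IH1 a X12 IH2]; intros X2 H.
  - destruct (leaf_eq_dec k1 l) as [->|Hk1].
    + rewrite subst_leaf_eq in H; symmetry; now apply subst_eq_W.
    + rewrite subst_leaf_neq in H by exact Hk1.
      destruct X2 as [k2|X21 b X22]; [|discriminate].
      destruct (leaf_eq_dec k2 l) as [->|Hk2].
      * rewrite subst_leaf_eq in H; rewrite <- H in W_has_l; now destruct (Hk1 W_has_l).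
      * now rewrite subst_leaf_neq in H.
  - destruct X2 as [k2|X21 b X22].
    + destruct (leaf_eq_dec k2 l) as [->|Hk2].
      * rewrite subst_leaf_eq in H; apply subst_eq_W in H; discriminate.
      * rewrite subst_leaf_neq in H by exact Hk2; discriminate.
    + injection H as H1 -> H2; f_equal; auto.
Qed.

Hypothesis W_irreducible : irreducible W.

Lemma tiled_subst_inv Y X :
  tiled Y (subst l W X) -> exists Y0, Y = subst l W Y0 /\ tiled Y0 X.
Proof.
  revert Y; induction X as [k|X1 IH1 a X2 IH2]; intros Y HY.
  - exists (Leaf k); split; [|apply tiled_refl].
    apply tiled_irreducible; [exact HY|].
    destruct (leaf_eq_dec k l) as [->|Hk].
    + now rewrite subst_leaf_eq.
    + rewrite subst_leaf_neq by exact Hk; apply irreducible_leaf.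
  - inversion HY as [HeqY|Z1 b Z2 H1 H2 Heq]; subst.
    + exists (Node X1 a X2); split; [reflexivity | apply tiled_refl].
    + destruct (IH1 _ H1) as [Y1 [-> T1]], (IH2 _ H2) as [Y2 [HY2 T2]].
      apply subst_inj in HY2; subst Y2.
      exists Y1; split; [reflexivity | now apply tiled_node].
Qed.

Lemma irreducible_subst X : irreducible X -> irreducible (subst l W X).
Proof.
  destruct X as [k|X1 a X2]; intro HX.
  - destruct (leaf_eq_dec k l) as [->|Hk].
    + now rewrite subst_leaf_eq.
    + rewrite subst_leaf_neq by exact Hk; apply irreducible_leaf.
  - intros Y Z1 b Z2 H1 H2 [= <- <- <-].
    destruct (tiled_subst_inv _ _ H1) as [Y1 [-> T1]].
    destruct (tiled_subst_inv _ _ H2) as [Y2 [HY2 T2]].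
    apply subst_inj in HY2; subst Y2.
    exact (HX _ _ _ _ T1 T2 eq_refl).
Qed.

End Subst.

Definition only_leaf l X : Prop := forall k, has_leaf k X -> k = l.

Lemma only_leaf_has l X : only_leaf l X -> has_leaf l X.
Proof. intro H; destruct (has_some_leaf X) as [k Hk]; now rewrite <- (H k Hk). Qed.

Lemma only_leaf_not l k X : only_leaf l X -> k <> l -> ~ has_leaf k X.
Proof. intros H Hk Hx; exact (Hk (H k Hx)). Qed.

Definition irreducible_TF Z : Prop :=
  has_leaf lT Z /\ has_leaf lF Z /\ irreducible Z.

Lemma irreducible_TF_node X1 a X2 :
  only_leaf lT X1 -> only_leaf lF X2 -> irreducible_TF (Node X1 a X2).
Proof.
  intros H1 H2; split; [|split].
  - left; now apply only_leaf_has.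
  - right; now apply only_leaf_has.
  - apply irreducible_node_disjoint; intros k Hk1 Hk2.
    specialize (H1 k Hk1); specialize (H2 k Hk2); congruence.
Qed.

Lemma irreducible_TF_node_swap X1 a X2 :
  irreducible_TF (Node X1 a X2) -> irreducible_TF (Node X2 a X1).
Proof.
  intros (HT & HF & HX); split; [|split]; [simpl in *; tauto .. |].
  intros Y Z1 b Z2 H1 H2 [= <- <- <-]; exact (HX Y X1 a X2 H2 H1 eq_refl).
Qed.

Lemma irreducible_TF_subst l W X :
  l = lT \/ l = lF -> irreducible_TF X -> irreducible_TF W -> irreducible_TF (subst l W X).
Proof.
  intros Hl (XT & XF & HX) (WT & WF & HW).
  assert (W_has_l : has_leaf l W) by (destruct Hl as [-> | ->]; assumption).
  split; [|split; [|now apply irreducible_subst]].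
  - destruct Hl as [-> | ->]; [apply has_leaf_subst_inner | apply has_leaf_subst_other];
      easy.
  - destruct Hl as [-> | ->]; [apply has_leaf_subst_other | apply has_leaf_subst_inner];
      easy.
Qed.

End Trees.

Lemma se_and {A} (P Q : term A) : se (tAnd P Q) = subst lT (se Q) (se P).
Proof. apply repl_subst_T. Qed.

Lemma se_or {A} (P Q : term A) : se (tOr P Q) = subst lF (se Q) (se P).
Proof. apply repl_subst_F. Qed.

Lemma se_Tstep {A} a (P Q : term A) :
  ~ has_leaf lF (se P) -> se (tOr (tAnd (tAtom a) P) Q) = Node (se P) a (se Q).
Proof.
  intro HP; rewrite se_or, se_and; simpl.
  now rewrite subst_id by (simpl; auto; discriminate).
Qed.

Lemma se_neg_Tstep {A} a (P Q : term A) :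
  ~ has_leaf lF (se P) -> se (tOr (tAnd (tNeg (tAtom a)) P) Q) = Node (se Q) a (se P).
Proof.
  intro HP; rewrite se_or, se_and; simpl.
  now rewrite subst_id by (simpl; auto; discriminate).
Qed.

Lemma se_Fstep {A} a (P Q : term A) :
  ~ has_leaf lT (se P) -> se (tAnd (tOr (tAtom a) P) Q) = Node (se Q) a (se P).
Proof.
  intro HP; rewrite se_and, se_or; simpl.
  now rewrite subst_id by (simpl; auto; discriminate).
Qed.

Lemma Tterm_only_T {A} (P : term A) : Tterm P -> only_leaf lT (se P).
Proof.
  induction 1 as [|a P Q _ IHP _ IHQ]; intros k Hk; [now symmetry|].
  rewrite se_Tstep in Hk by (apply (only_leaf_not _ _ _ IHP); discriminate).
  destruct Hk; auto.
Qed.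

Lemma Fterm_only_F {A} (P : term A) : Fterm P -> only_leaf lF (se P).
Proof.
  induction 1 as [|a P Q _ IHP _ IHQ]; intros k Hk; [now symmetry|].
  rewrite se_Fstep in Hk by (apply (only_leaf_not _ _ _ IHP); discriminate).
  destruct Hk; auto.
Qed.

Lemma lterm_irreducible_TF {A} (P : term A) : lterm P -> irreducible_TF (se P).
Proof.
  intros [a P' Q HP HQ|a P' Q HP HQ];
    apply Tterm_only_T in HP; apply Fterm_only_F in HQ;
    assert (HPF : ~ has_leaf lF (se P')) by (apply (only_leaf_not _ _ _ HP); discriminate).
  - rewrite se_Tstep by exact HPF; now apply irreducible_TF_node.
  - rewrite se_neg_Tstep by exact HPF; now apply irreducible_TF_node_swap, irreducible_TF_node.
Qed.

Scheme starterm_mut := Induction for starterm Sort Prop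
with cterm_mut := Induction for cterm Sort Prop
with dterm_mut := Induction for dterm Sort Prop.

Lemma starterm_irreducible_TF {A} (P : term A) : starterm P -> irreducible_TF (se P).
Proof.
  induction 1 using starterm_mut with
    (P0 := fun P _ => irreducible_TF (se P)) (P1 := fun P _ => irreducible_TF (se P));
    try (now apply lterm_irreducible_TF); try assumption.
  - rewrite se_and; apply irreducible_TF_subst; auto.
  - rewrite se_or; apply irreducible_TF_subst; auto.
Qed.

Theorem lemma3p3 (A : Type) (a0 : A) :
  ~ exists (P : term A) (X Y : etree A),
      starterm P /\
      in_TA Y /\
      X <> Leaf lTri /\
      has_leaf lTri X /\
      ~ has_leaf lT X /\
      ~ has_leaf lF X /\
      se P = repl (Leaf lT) (Leaf lF) Y X.
Proof.
  intros (P & X & Y & HP & _ & HX & _ & HT & HF & Hse).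
  destruct (starterm_irreducible_TF P HP) as (_ & _ & Hirr).
  destruct X as [[| |]|X1 a X2];
    [now contradiction HT | now contradiction HF | now contradiction HX |].
  simpl in HT, HF.
  apply (Hirr Y (repl (Leaf lT) (Leaf lF) Y X1) a (repl (Leaf lT) (Leaf lF) Y X2));
    [apply tiled_by_repl_tri; tauto .. | exact Hse].
Qed.
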